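(* Let $G$ be a finitely generated infinite group and let $V$ be a finite-dimensional vector space. Let $\tau\in\mathrm{LNUCA}_c(G,V)$ be stably injective and let $\Gamma=\tau(V^G)$. Then there exists a finite subset $N\subset G$ such that for every $d\in\Gamma$ and every $g\in G$, the element $\tau^{-1}(d)(g)\in V$ depends only on the restriction $d\vert_{gN}$.
   Context: For $g\in G$ and $x\in V^G$, $(gx)(h)=x(g^{-1}h)$. For finite $M\subset G$, $S=\mathcal{L}(V^M,V)$ and $s\in S^G$, $\sigma_s\colon V^G\to V^G$ is $\sigma_s(x)(g)=s(g)((g^{-1}x)\vert_M)$. $\mathrm{LNUCA}_c(G,V)$ is the set of maps $\sigma_s$ with $M$ finite and $s$ constant outside some finite subset of $G$. For $s\in S^G$, $\Sigma(s)$ is the closure of $\{gs:g\in G\}$ in $S^G$ for the prodiscrete topology (with $(gs)(h)=s(g^{-1}h)$). $\tau=\sigma_s$ is stably injective if $\sigma_p$ is injective for every $p\in\Sigma(s)$ (in particular $\tau$ is injective, so $\tau^{-1}(d)$ is well defined for $d\in\Gamma$). *)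

From HB Require Import structures.
From mathcomp Require Import all_boot all_order all_algebra.
Set Implicit Arguments. Unset Strict Implicit. Unset Printing Implicit Defensive.
Import GRing.Theory.
Local Open Scope ring_scope.

Record group := Group {
  gcar :> eqType;
  gmul : gcar -> gcar -> gcar;
  gone : gcar;
  ginv : gcar -> gcar;
  gmulA : forall a b c, gmul a (gmul b c) = gmul (gmul a b) c;
  gmul1l : forall a, gmul gone a = a;
  gmulVl : forall a, gmul (ginv a) a = gone }.

Section Defs.
Variable G : group.

Inductive generated_by (S : seq G) : G -> Prop :=
  | gen_one : generated_by S (gone G)
  | gen_mul : forall s g, s \in S -> generated_by S g -> generated_by S (gmul s g)
  | gen_mulV : forall s g, s \in S -> generated_by S g -> generated_by S (gmul (ginv s) g).

Definition finitely_generated : Prop :=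
  exists S : seq G, forall g : G, generated_by S g.

Definition infinite_group : Prop :=
  ~ (exists E : seq G, forall g : G, g \in E).

Variables (K : fieldType) (V : vectType K).

(* M is a finite subset of G, given as a finite family M : 'I_n -> G;
   V^M is {ffun 'I_n -> V}; S = L(V^M, V). *)
Definition locrule (n : nat) := {linear {ffun 'I_n -> V} -> V}.

Definition gact (g : G) (x : G -> V) : G -> V := fun h => x (gmul (ginv g) h).

Definition restr n (M : 'I_n -> G) (x : G -> V) : {ffun 'I_n -> V} :=
  [ffun i => x (M i)].

Definition sigma n (M : 'I_n -> G) (s : G -> locrule n) (x : G -> V) : G -> V :=
  fun g => s g (restr M (gact (ginv g) x)).

Definition sact n (g : G) (s : G -> locrule n) : G -> locrule n :=
  fun h => s (gmul (ginv g) h).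

Definition asympt_const n (s : G -> locrule n) : Prop :=
  exists (E : seq G) (s0 : locrule n), forall g, g \notin E -> s g = s0.

(* p in Sigma(s): p lies in the closure of the orbit {g s} for the
   prodiscrete topology on S^G, i.e. every basic open neighbourhood
   {q | q = p on F}, F finite, meets the orbit. *)
Definition in_Sigma n (s p : G -> locrule n) : Prop :=
  forall F : seq G, exists g : G, forall h, h \in F -> sact g s h = p h.

Definition stably_injective n (M : 'I_n -> G) (s : G -> locrule n) : Prop :=
  forall p, in_Sigma s p -> injective (sigma M p).

End Defs.

From HB Require Import structures.
From mathcomp Require Import all_boot all_order all_algebra.
From Stdlib Require Import Classical ClassicalEpsilon FunctionalExtensionality.
From mathcomp Require Import zify.
Set Implicit Arguments. Unset Strict Implicit. Unset Printing Implicit Defensive.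
Import GRing.Theory.
Local Open Scope ring_scope.

(* For an injective linear cellular automaton sigma_p and a point g, the
   spaces {z g | sigma_p z = 0 on N} shrink as the finite window N grows and,
   V being finite dimensional, stabilise.  A Mittag-Leffler argument along an
   enumeration of the countable group G turns every value in the stable space
   into z g for a z with sigma_p z = 0 everywhere, so that value is 0: the
   value z g is determined by sigma_p z on a finite window.  The rule s agrees
   with a constant rule s0 off a finite set E; the constant rule lies in
   Sigma(s) because G is infinite, and by translation invariance one window N0
   serves it at every g.  Where g N0 meets E, which happens for finitely many
   g only, the windows of s itself are used. *)

Section GroupTheory.
Variable G : group.
Implicit Types a b : G.

Lemma gmulV a : gmul a (ginv a) = gone G.
Proof.
rewrite -[gmul a _]gmul1l -{1}(gmulVl (ginv a)) -gmulA.
by rewrite [gmul (ginv a) (gmul a _)]gmulA gmulVl gmul1l gmulVl.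
Qed.

Lemma gmul1r a : gmul a (gone G) = a.
Proof. by rewrite -(gmulVl a) gmulA gmulV gmul1l. Qed.

Lemma ginvK a : ginv (ginv a) = a.
Proof. by rewrite -[RHS]gmul1l -(gmulVl (ginv a)) -gmulA gmulVl gmul1r. Qed.

Lemma ginv1 : ginv (gone G) = gone G.
Proof. by rewrite -[LHS]gmul1r gmulVl. Qed.

Lemma gmulK a b : gmul (gmul b a) (ginv a) = b.
Proof. by rewrite -gmulA gmulV gmul1r. Qed.

Lemma gmulKg a b : gmul (ginv a) (gmul a b) = b.
Proof. by rewrite gmulA gmulVl gmul1l. Qed.

Lemma gmulKVg a b : gmul a (gmul (ginv a) b) = b.
Proof. by rewrite gmulA gmulV gmul1l. Qed.

Definition eval_word (S : seq G) (w : seq (bool * nat)) : G :=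
  foldr (fun bi x => gmul (if bi.1 then ginv (nth (gone G) S bi.2)
                           else nth (gone G) S bi.2) x) (gone G) w.

Lemma generated_by_word S g : generated_by S g -> exists w, eval_word S w = g.
Proof.
elim=> [|s x sS _ [w <-]|s x sS _ [w <-]]; first by exists [::].
  by exists ((false, index s S) :: w); rewrite /= nth_index.
by exists ((true, index s S) :: w); rewrite /= nth_index.
Qed.

Lemma finitely_generated_countable :
  finitely_generated G -> exists (e : nat -> G) (idx : G -> nat), cancel idx e.
Proof.
case=> S gS.
pose word h : seq (bool * nat) :=
  proj1_sig (constructive_indefinite_description _ (generated_by_word (gS h))).
exists (fun k => if unpickle k is Some w then eval_word S w else gone G).
exists (fun h => pickle (word h)) => h.
by rewrite pickleK /word; case: constructive_indefinite_description.
Qed.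

Lemma infinite_group_notin : infinite_group G -> forall L : seq G, exists a, a \notin L.
Proof.
move=> infG L; apply: NNPP => noa; apply: infG; exists L => a.
by apply: NNPP => aL; apply: noa; exists a; apply/negP.
Qed.

Lemma translate_notin (E F : seq G) a h :
  a \notin [seq gmul d (ginv k) | d <- E, k <- F] -> h \in F -> gmul a h \notin E.
Proof.
by move=> aL hF; apply: contra aL => ahE; rewrite -(gmulK h a); exact: allpairs_f.
Qed.

End GroupTheory.

Section SubspacePredicates.
Variables (K : fieldType) (V : vectType K).

Definition subspace_pred (Q : V -> Prop) :=
  [/\ Q 0, forall a b, Q a -> Q b -> Q (a + b) & forall c a, Q a -> Q (c *: a)].

Lemma subspace_pred_vspace Q :
  subspace_pred Q -> exists U : {vspace V}, forall v, v \in U <-> Q v.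
Proof.
case=> Q0 QD QZ.
suff grow : forall k (U : {vspace V}), (\dim {:V} - \dim U)%N = k ->
    (forall v, v \in U -> Q v) -> exists U' : {vspace V}, forall v, v \in U' <-> Q v.
  by apply: (grow _ 0%VS erefl) => v; rewrite memv0 => /eqP ->.
elim/ltn_ind=> k IH U dimU UQ.
case: (classic (forall v, Q v -> v \in U)) => [QU | /not_all_ex_not [v]].
  by exists U => v; split; [apply: UQ | apply: QU].
move=> /(imply_to_and (Q v)) [Qv vU].
have sUUv : (U <= U + <[v]>)%VS by exact: addvSl.
have ltUUv : (\dim U < \dim (U + <[v]>))%N.
  rewrite (ltn_leqif (dimv_leqif_sup sUUv)); apply/negP => /subvP sUvU.
  by apply/vU/sUvU/(subvP (addvSr U _)); exact: memv_line.
apply: (IH _ _ (U + <[v]>)%VS erefl).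
  by rewrite -dimU; have := dimvS (subvf (U + <[v]>)%VS); move: ltUUv; lia.
by move=> x /memv_addP [y yU [w /vlineP [c ->] ->]]; apply: QD; [apply: UQ | apply: QZ].
Qed.

Lemma antitone_subspace_pred_stable (T : eqType) (P : seq T -> V -> Prop) :
  (forall N, subspace_pred (P N)) ->
  (forall N N' : seq T, {subset N <= N'} -> forall v, P N' v -> P N v) ->
  exists Ns, forall N v, P Ns v -> P N v.
Proof.
move=> Psub Panti.
suff shrink : forall k N0 (U0 : {vspace V}), \dim U0 = k ->
    (forall v, v \in U0 <-> P N0 v) -> exists Ns, forall N v, P Ns v -> P N v.
  by have [U0 U0P] := subspace_pred_vspace (Psub [::]); exact: shrink U0P.
elim/ltn_ind=> k IH N0 U0 dimU0 U0P.
case: (classic (forall N v, P N0 v -> P (N0 ++ N) v)) => [stable | ].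
  exists N0 => N v /(stable N); apply: Panti => x.
  by rewrite mem_cat orbC => ->.
move=> /not_all_ex_not [N /not_all_ex_not [v /(imply_to_and (P N0 v)) [P0v Pv]]].
have [U1 U1P] := subspace_pred_vspace (Psub (N0 ++ N)).
apply: (IH _ _ _ U1 erefl U1P).
have sU10 : (U1 <= U0)%VS.
  apply/subvP => x /U1P P1x; apply/U0P; apply: Panti P1x => y.
  by rewrite mem_cat => ->.
rewrite -dimU0 (ltn_leqif (dimv_leqif_sup sU10)); apply/negP => /subvP sU01.
exact/Pv/U1P/sU01/U0P.
Qed.

End SubspacePredicates.

Section ExtensionLimit.
Variables (T : eqType) (A : Type) (ok : seq T -> (T -> A) -> Prop).
Variables (e : nat -> T) (idx : T -> nat).
Hypothesis idxK : cancel idx e.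

Section Approximants.
Variables (ext : seq T -> (T -> A) -> T -> T -> A) (D0 : seq T) (u0 : T -> A).
Hypothesis extP :
  forall D u h, ok D u -> {in D, ext D u h =1 u} /\ ok (h :: D) (ext D u h).
Hypothesis ok0 : ok D0 u0.

Fixpoint window k := if k is k'.+1 then e k' :: window k' else D0.

Fixpoint approx k := if k is k'.+1 then ext (window k') (approx k') (e k') else u0.

Lemma window_mono k m : (k <= m)%N -> {subset window k <= window m}.
Proof.
elim: m => [|m IHm]; first by rewrite leqn0 => /eqP ->.
rewrite leq_eqVlt => /orP [/eqP -> //|/IHm sub] x /sub xm.
by rewrite inE xm orbT.
Qed.

Lemma approx_ok k : ok (window k) (approx k).
Proof. by elim: k => [|k IHk] //=; case: (extP (e k) IHk). Qed.

Lemma approx_stable k m : (k <= m)%N -> {in window k, approx m =1 approx k}.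
Proof.
elim: m => [|m IHm]; first by rewrite leqn0 => /eqP ->.
rewrite leq_eqVlt ltnS => /orP [/eqP -> //|le_km] d dk /=.
have [agree _] := extP (e m) (approx_ok m).
by rewrite agree ?(IHm le_km) // (window_mono le_km dk).
Qed.

Definition limit h := approx (idx h).+1 h.

Lemma limit_approx k : {in window k, limit =1 approx k}.
Proof.
move=> d dk; have dl : d \in window (idx d).+1 by rewrite inE idxK eqxx.
by rewrite /limit -(approx_stable (leq_maxl _ k) dl) (approx_stable (leq_maxr _ k)).
Qed.

Lemma window_covers (W : seq T) : exists k, {subset W <= window k}.
Proof.
exists (\max_(w <- W) (idx w).+1)%N => w wW.
by apply: (window_mono (leq_bigmax_seq _ wW isT)); rewrite inE idxK eqxx.
Qed.

End Approximants.

Lemma extension_limit D0 u0 :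
  (forall D u h, ok D u -> exists u', {in D, u' =1 u} /\ ok (h :: D) u') ->
  ok D0 u0 ->
  exists z, {in D0, z =1 u0} /\
    forall W : seq T, exists D u, [/\ ok D u, {subset W <= D} & {in D, z =1 u}].
Proof.
move=> ext_ex ok0.
pose ext D u h := epsilon (inhabits u) (fun u' => {in D, u' =1 u} /\ ok (h :: D) u').
have extP D u h : ok D u -> {in D, ext D u h =1 u} /\ ok (h :: D) (ext D u h).
  by move/(ext_ex _ _ h); exact: epsilon_spec.
exists (limit ext D0 u0); split; first exact: (limit_approx extP ok0 (k := 0)).
move=> W; have [k Wk] := window_covers D0 W.
exists (window D0 k), (approx ext D0 u0 k).
by split; [exact: approx_ok | | exact: limit_approx].
Qed.

End ExtensionLimit.

Definition vanishes_on (T : eqType) (U : zmodType) (N : seq T) (f : T -> U) :=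
  forall h, h \in N -> f h = 0.

Section LinearCellularAutomata.
Variables (G : group) (K : fieldType) (V : vectType K) (n : nat) (M : 'I_n -> G).
Implicit Types (p : G -> locrule V n) (x z : G -> V).

Lemma sigma0 p h : sigma M p (fun _ => 0) h = 0.
Proof. by rewrite /sigma -[RHS](linear0 (p h)); congr (p h _). Qed.

Lemma sigmaD p z1 z2 h :
  sigma M p (fun q => z1 q + z2 q) h = sigma M p z1 h + sigma M p z2 h.
Proof.
rewrite /sigma -linearD; congr (p h _).
by apply/ffunP => i; rewrite !ffunE.
Qed.

Lemma sigmaB p z1 z2 h :
  sigma M p (fun q => z1 q - z2 q) h = sigma M p z1 h - sigma M p z2 h.
Proof.
rewrite /sigma -linearB; congr (p h _).
by apply/ffunP => i; rewrite !ffunE.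
Qed.

Lemma sigmaZ p c z h : sigma M p (fun q => c *: z q) h = c *: sigma M p z h.
Proof.
rewrite /sigma -linearZ; congr (p h _).
by apply/ffunP => i; rewrite !ffunE.
Qed.

Lemma eq_sigma_at p z1 z2 h :
  (forall i, z1 (gmul h (M i)) = z2 (gmul h (M i))) ->
  sigma M p z1 h = sigma M p z2 h.
Proof.
move=> z12; rewrite /sigma; congr (p h _).
by apply/ffunP => i; rewrite !ffunE /gact ginvK.
Qed.

Lemma sigma_translate p x g h :
  sigma M p (fun q => x (gmul g q)) h = sigma M (sact g p) x (gmul g h).
Proof.
rewrite /sigma /sact gmulKg; congr (p h _).
by apply/ffunP => i; rewrite !ffunE /gact !ginvK gmulA.
Qed.

Lemma in_Sigma_refl p : in_Sigma p p.
Proof. by move=> F; exists (gone G) => h _; rewrite /sact ginv1 gmul1l. Qed.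

Lemma const_in_Sigma p (E : seq G) (p0 : locrule V n) :
  infinite_group G -> (forall g, g \notin E -> p g = p0) -> in_Sigma p (fun _ => p0).
Proof.
move=> infG p_const F.
have [a aL] := infinite_group_notin infG [seq gmul d (ginv k) | d <- E, k <- F].
by exists (ginv a) => h hF; rewrite /sact ginvK p_const // (translate_notin aL).
Qed.

Section Inversion.
Variable p : G -> locrule V n.

Definition constrained_values (D : seq G) (h0 : G) (N : seq G) (v : V) :=
  exists z, [/\ vanishes_on D z, vanishes_on N (sigma M p z) & z h0 = v].

Lemma constrained_values_subspace D h0 N :
  subspace_pred (constrained_values D h0 N).
Proof.
split.
- by exists (fun _ => 0); split=> // h _; exact: sigma0.
- move=> a b [z1 [z1D z1N <-]] [z2 [z2D z2N <-]].
  exists (fun q => z1 q + z2 q); split=> // h hN.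
    by rewrite z1D // z2D // addr0.
  by rewrite sigmaD z1N // z2N // addr0.
- move=> c a [z [zD zN <-]]; exists (fun q => c *: z q); split=> // h hN.
    by rewrite zD // scaler0.
  by rewrite sigmaZ zN // scaler0.
Qed.

Lemma constrained_values_stable D h0 :
  exists Ns, forall N v, constrained_values D h0 Ns v -> constrained_values D h0 N v.
Proof.
apply: antitone_subspace_pred_stable; first exact: constrained_values_subspace.
by move=> N N' sNN' v [z [zD zN' zh0]]; exists z; split=> // h /sNN'; exact: zN'.
Qed.

Definition extendable (D : seq G) (u : G -> V) :=
  forall N, exists z, {in D, z =1 u} /\ vanishes_on N (sigma M p z).

Lemma extendable_cons D u h0 :
  extendable D u -> exists u', {in D, u' =1 u} /\ extendable (h0 :: D) u'.
Proof.
move=> Du; have [Ns Ns_stable] := constrained_values_stable D h0.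
have [z1 [z1D z1Ns]] := Du Ns.
exists (fun q => if q == h0 then z1 h0 else u q); split.
  by move=> d dD /=; case: eqP => [dh0|//]; rewrite -dh0; exact: z1D.
move=> N; have [z2 [z2D z2N]] := Du (Ns ++ N).
have [z3 [z3D z3N z3h0]] : constrained_values D h0 N (z1 h0 - z2 h0).
  apply: Ns_stable; exists (fun q => z1 q - z2 q); split=> // h hD.
    by rewrite z1D // z2D // subrr.
  by rewrite sigmaB z1Ns // z2N ?subrr // mem_cat hD.
exists (fun q => z2 q + z3 q); split.
  move=> d; rewrite inE /=; case: eqP => [-> _|_ /= dD].
    by rewrite z3h0 addrC subrK.
  by rewrite z2D // z3D // addr0.
by move=> h hN; rewrite sigmaD z2N ?z3N ?addr0 // mem_cat hN orbT.
Qed.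

Definition locally_invertible_at (N : seq G) (g : G) :=
  forall z, vanishes_on N (fun h => sigma M p z (gmul g h)) -> z g = 0.

Lemma locally_invertible_at_subset (N N' : seq G) g :
  {subset N <= N'} -> locally_invertible_at N g -> locally_invertible_at N' g.
Proof. by move=> sNN' Ninv z zN'; apply: Ninv => h /sNN'; exact: zN'. Qed.

Lemma locally_invertible_at_eq N g x y :
  locally_invertible_at N g ->
  (forall h, h \in N -> sigma M p x (gmul g h) = sigma M p y (gmul g h)) ->
  x g = y g.
Proof.
move=> Ninv xy; apply/eqP; rewrite -subr_eq0; apply/eqP.
by apply: (Ninv (fun q => x q - y q)) => h hN; rewrite sigmaB xy // subrr.
Qed.

Variables (e : nat -> G) (idx : G -> nat).
Hypothesis idxK : cancel idx e.

Lemma extendable_global D u :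
  extendable D u -> exists z, {in D, z =1 u} /\ forall h, sigma M p z h = 0.
Proof.
move=> Du; have [z [zD z_local]] := extension_limit idxK extendable_cons Du.
exists z; split=> // h.
have [D' [u' [Du' sub zD']]] := z_local [seq gmul h (M i) | i <- enum 'I_n].
have [z' [z'D' z'h]] := Du' [:: h].
rewrite (@eq_sigma_at _ z z') ?z'h ?mem_head // => i.
have hMi : gmul h (M i) \in D' by apply/sub/map_f; rewrite mem_enum.
by rewrite zD' // z'D'.
Qed.

Lemma injective_locally_invertible :
  injective (sigma M p) -> forall g, exists N, locally_invertible_at N g.
Proof.
move=> injp g; have [Ns Ns_stable] := constrained_values_stable [::] g.
exists [seq gmul (ginv g) k | k <- Ns] => z zN.
have z_ext : extendable [:: g] (fun _ => z g).
  move=> N; have [z' [_ z'N z'g]] : constrained_values [::] g N (z g).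
    apply: Ns_stable; exists z; split=> // k kNs.
    by rewrite -(gmulKVg g k); apply/zN/map_f.
  by exists z'; split=> // d; rewrite inE => /eqP ->.
have [z' [z'g z'0]] := extendable_global z_ext.
have z'_eq0 : z' = fun _ => 0.
  by apply: injp; apply: functional_extensionality => h; rewrite z'0 sigma0.
by rewrite -(z'g g (mem_head _ _)) z'_eq0.
Qed.

Lemma injective_locally_invertible_seq :
  injective (sigma M p) -> forall L : seq G,
  exists N, forall g, g \in L -> locally_invertible_at N g.
Proof.
move=> injp; elim=> [|g L [NL NLinv]]; first by exists [::].
have [Ng Nginv] := injective_locally_invertible injp g.
exists (Ng ++ NL) => f; rewrite inE => /predU1P [->|fL].
  by apply: (locally_invertible_at_subset _ Nginv) => h hNg; rewrite mem_cat hNg.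
apply: (locally_invertible_at_subset _ (NLinv f fL)) => h hNL.
by rewrite mem_cat hNL orbT.
Qed.

End Inversion.

Lemma locally_invertible_at_rule p q N g :
  (forall h, h \in N -> p (gmul g h) = q (gmul g h)) ->
  locally_invertible_at p N g -> locally_invertible_at q N g.
Proof.
by move=> pq pinv z zN; apply: pinv => h hN; rewrite /sigma pq //; exact: zN.
Qed.

Lemma const_rule_locally_invertible (p0 : locrule V n) (e : nat -> G) (idx : G -> nat) :
  cancel idx e -> injective (sigma M (fun _ => p0)) ->
  exists N, forall g, locally_invertible_at (fun _ => p0) N g.
Proof.
move=> idxK injp; have [N Ninv] := injective_locally_invertible idxK injp (gone G).
exists N => g z zN; rewrite -[g]gmul1r.
apply: (Ninv (fun q => z (gmul g q))) => h hN.
by rewrite gmul1l sigma_translate; exact: zN.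
Qed.

End LinearCellularAutomata.

Theorem lemma4p1 (G : group) (K : fieldType) (V : vectType K)
  (fgG : finitely_generated G) (infG : infinite_group G)
  (n : nat) (M : 'I_n -> G) (s : G -> locrule V n)
  (hs : asympt_const s) (hinj : stably_injective M s) :
  exists N : seq G, forall (x y : G -> V) (g : G),
    (forall h, h \in N -> sigma M s x (gmul g h) = sigma M s y (gmul g h)) ->
    x g = y g.
Proof.
have [e [idx idxK]] := finitely_generated_countable fgG.
have [E [s0 s_const]] := hs.
have [N0 N0inv] :=
  const_rule_locally_invertible idxK (hinj _ (const_in_Sigma infG s_const)).
(* Off L, s coincides with the constant rule on g N0. *)
pose L := [seq gmul d (ginv h) | d <- E, h <- N0].
have [NL NLinv] := injective_locally_invertible_seq idxK (hinj _ (in_Sigma_refl s)) L.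
exists (N0 ++ NL) => x y g; apply: locally_invertible_at_eq.
have [gL | gL] := boolP (g \in L).
  apply: (locally_invertible_at_subset _ (NLinv g gL)) => h hNL.
  by rewrite mem_cat hNL orbT.
apply: (locally_invertible_at_subset (N := N0)) => [h hN0|].
  by rewrite mem_cat hN0.
apply: locally_invertible_at_rule (N0inv g) => h hN0.
by rewrite s_const // (translate_notin gL).
Qed.
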